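(* Let $X$ be a compact metric space, $Y\subseteq\mathbb{R}$, and $\rho$ a Borel probability measure on $X\times Y$ with marginal $\rho_X$ (such that the error quantities below are finite). Let $K:X\times X\to\mathbb{R}$ be a positive-definite reproducing kernel on $X$ with $K(\cdot,x)\in C(X)$, such that the closed linear span of $\{K(\cdot,x):x\in X\}$ in $C(X)$ equals $C(X)$, and such that for every $m$ and every pairwise distinct ${\bf x}=(x_1,\dots,x_m)$ in $X$, $\|K[{\bf x}]^{-1}K_{\bf x}(x)\|_1\le 1$ for all $x\in X$, where $(K[{\bf x}])_{j,k}=K(x_k,x_j)$ and $K_{\bf x}(x)=(K(x,x_j))_{j=1}^m$. Let $\mathcal{B}=\{f_\mu=\int_X K(t,\cdot)\,d\mu(t):\mu\in\mathcal{M}(X)\}$ with $\|f_\mu\|_{\mathcal B}=\|\mu\|$ (total variation), $\mathcal{M}(X)$ being the signed Borel measures on $X$ of bounded total variation. Let ${\bf z}=\{(x_j,y_j)\}_{j=1}^m\subseteq X\times Y$ with $x_j$ pairwise distinct, $\lambda>0$, let $\boldsymbol{c}_{{\bf z},\lambda}$ minimize $\frac1m\sum_{j=1}^m|K^{\bf x}(x_j)\boldsymbol{c}-y_j|^2+\lambda\|\boldsymbol{c}\|_1$ over $\boldsymbol{c}\in\mathbb{R}^m$, where $K^{\bf x}(x)=(K(x_j,x))_{j=1}^m$ (row vector), and $f_{{\bf z},\lambda}=K^{\bf x}(\cdot)\boldsymbol{c}_{{\bf z},\lambda}$. Then for all $g\in\mathcal{B}$, $$\mathcal{E}(f_{{\bf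 z},\lambda})-\mathcal{E}(f_\rho)\le\mathcal{S}({\bf z},\lambda,g)+\mathcal{D}(\lambda,g).$$
   Context: $\mathcal{E}(f)=\int_{X\times Y}|f(x)-y|^2\,d\rho$, $\mathcal{E}_{\bf z}(f)=\frac1m\sum_{j=1}^m(f(x_j)-y_j)^2$, $f_\rho(x)=\int_Y y\,d\rho(y|x)$ is the regression function. The sampling error is $\mathcal{S}({\bf z},\lambda,g)=\mathcal{E}(f_{{\bf z},\lambda})-\mathcal{E}_{\bf z}(f_{{\bf z},\lambda})+\mathcal{E}_{\bf z}(g)-\mathcal{E}(g)$ and the regularization error is $\mathcal{D}(\lambda,g)=\mathcal{E}(g)-\mathcal{E}(f_\rho)+\lambda\|g\|_{\mathcal B}$. *)

From HB Require Import structures.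
From mathcomp Require Import all_boot all_order all_algebra.
From mathcomp Require Import all_classical all_reals all_analysis.
Set Implicit Arguments. Unset Strict Implicit. Unset Printing Implicit Defensive.
Import Order.TTheory GRing.Theory Num.Theory.
Import numFieldNormedType.Exports.
Local Open Scope classical_set_scope.
Local Open Scope ring_scope.

Definition borelType (X : ptopologicalType) : Type := g_sigma_algebraType (@open X).

Section charges.
Context {d} {T : measurableType d} {R : realType}.

Definition cintegral (nu : {charge set T -> \bar R}) (f : T -> R) : \bar R :=
  let: exist P hP := cid (Hahn_decomposition nu) in
  let: exist N hPN := cid hP in
  (\int[jordan_pos hPN]_t (f t)%:E - \int[jordan_neg hPN]_t (f t)%:E)%E.

Definition charge_tv_norm (nu : {charge set T -> \bar R}) : R :=
  let: exist P hP := cid (Hahn_decomposition nu) in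
  let: exist N hPN := cid hP in
  fine (charge_variation hPN [set: T]).
End charges.

Section kernel_defs.
Context {R : realType} {X : Type} (K : X -> X -> R).

Definition Kmat m (x : 'I_m -> X) : 'M[R]_m := \matrix_(j, k) K (x k) (x j).
Definition Kcol m (x : 'I_m -> X) (t : X) : 'cV[R]_m := \col_j K t (x j).
Definition Krow m (x : 'I_m -> X) (t : X) : 'rV[R]_m := \row_j K (x j) t.

Definition l1norm m (v : 'cV[R]_m) : R := \sum_j `|v j 0|.

Definition pd_reproducing_kernel : Prop :=
  (forall s t, K s t = K t s) /\
  forall m (x : 'I_m -> X), injective x ->
    forall c : 'cV[R]_m, c != 0 -> 0 < (c^T *m Kmat x *m c) 0 0.
End kernel_defs.

Section learning.
Context {R : realType} {X : ptopologicalType}.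

(* the closed linear span of {K(.,t) : t in X} in (C(X), sup-norm) is C(X) *)
Definition kernel_span_dense (K : X -> X -> R) : Prop :=
  forall f : X -> R, continuous f -> forall e : R, 0 < e ->
    exists n (a : 'I_n -> R) (t : 'I_n -> X),
      forall s, `|f s - \sum_(i < n) a i * K s (t i)| < e.

Definition emp_error m (x : 'I_m -> X) (y : 'I_m -> R) (f : X -> R) : R :=
  (m%:R)^-1 * \sum_(j < m) (f (x j) - y j) ^+ 2.

Definition l1_objective (K : X -> X -> R) m (x : 'I_m -> X) (y : 'I_m -> R)
    (lam : R) (c : 'cV[R]_m) : R :=
  (m%:R)^-1 * \sum_(j < m) ((Krow K x (x j) *m c) 0 0 - y j) ^+ 2
  + lam * l1norm c.

Definition kernel_expansion (K : X -> X -> R) m (x : 'I_m -> X) (c : 'cV[R]_m)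
  : X -> R := fun t => (Krow K x t *m c) 0 0.

Definition f_of_measure (K : X -> X -> R)
    (mu : {charge set borelType X -> \bar R}) : X -> R :=
  fun s => fine (cintegral mu (fun t : borelType X => K t s)).

Variable rho : probability (borelType X * R)%type R.

Definition gen_error_ext (f : X -> R) : \bar R :=
  (\int[rho]_p ((f p.1 - p.2) ^+ 2)%:E)%E.
Definition gen_error (f : X -> R) : R := fine (gen_error_ext f).

Definition conditional_distribution (k : R.-pker (borelType X) ~> R) : Prop :=
  forall (A : set (borelType X)) (B : set R), measurable A -> measurable B ->
    rho (A `*` B) = (\int[pushforward rho fst]_(x in A) k x B)%E.

Definition regression_function (k : R.-pker (borelType X) ~> R) : X -> R :=
  fun x => fine (\int[k x]_v v%:E)%E.
Definition sampling_error m (x : 'I_m -> X) (y : 'I_m -> R) (fz g : X -> R) : R :=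
  gen_error fz - emp_error x y fz + emp_error x y g - gen_error g.

(* regularization error D(lambda, g), where gnorm = ||g||_B *)
Definition regularization_error (frho : X -> R) (lam : R) (g : X -> R) (gnorm : R)
  : R := gen_error g - gen_error frho + lam * gnorm.
End learning.

From HB Require Import structures.
From mathcomp Require Import all_boot all_order all_algebra.
From mathcomp Require Import all_classical all_reals all_analysis.
From mathcomp Require Import measurable_realfun lra.
Import Order.TTheory GRing.Theory Num.Theory.
Import numFieldNormedType.Exports.
Local Open Scope classical_set_scope.
Local Open Scope ring_scope.

(* Since K[x] is invertible, every g = f_mu of B is interpolated on the sample
   by the kernel expansion with coefficients
   c' = K[x]^-1 (g(x_j))_j = int K[x]^-1 K_x(t) dmu(t),
   and the hypothesis ||K[x]^-1 K_x(t)||_1 <= 1 gives ||c'||_1 <= ||mu||.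
   Comparing the minimizer c with c' yields
   E_z(f_{z,lam}) + lam ||c||_1 <= E_z(g) + lam ||mu||, and the claimed
   decomposition is this inequality after adding and subtracting E(f_{z,lam}),
   E(g) and E(f_rho). *)

Lemma continuous_borel_measurable (R : realType) (X : ptopologicalType)
    (f : X -> R) :
  continuous f -> measurable_fun [set: borelType X] (f : borelType X -> R).
Proof.
move=> /continuousP cf.
apply: (@measurability _ _ (borelType X) R setT f _ (RGenOpens.measurableE R)).
move=> _ [_ [a [b ->]] <-].
by rewrite setTI; apply: sub_sigma_algebra; apply: cf; exact: interval_open.
Qed.

Section Rintegral_linear.
Context {d} {T : measurableType d} {R : realType}.
Variable mu : {measure set T -> \bar R}.

Lemma integrable_sumr I (s : seq I) (h : I -> T -> R) :
  (forall i, mu.-integrable setT (EFin \o h i)) ->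
  mu.-integrable setT (EFin \o (fun t => \sum_(i <- s) h i t)).
Proof.
move=> hi; have -> : EFin \o (fun t => \sum_(i <- s) h i t) =
    (fun t => \sum_(i <- s) (h i t)%:E) by apply/funext => t; rewrite sumEFin.
by apply: integrable_sum => // i _; exact: hi.
Qed.

Lemma Rintegral_sum I (s : seq I) (h : I -> T -> R) :
  (forall i, mu.-integrable setT (EFin \o h i)) ->
  \int[mu]_t (\sum_(i <- s) h i t) = \sum_(i <- s) \int[mu]_t h i t.
Proof.
move=> hi; rewrite /Rintegral.
under eq_integral => t _ do rewrite -sumEFin.
rewrite (@integral_sum _ _ _ mu setT measurableT _ (fun i t => (h i t)%:E)) //.
rewrite (eq_bigr (fun i => (fine (\int[mu]_t (h i t)%:E))%:E)) ?sumEFin //.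
by move=> i _; rewrite fineK //; apply: integrable_fin_num => //; exact: hi.
Qed.

Lemma integrableZl_EFin (k : R) (f : T -> R) :
  mu.-integrable setT (EFin \o f) ->
  mu.-integrable setT (EFin \o (fun t => k * f t)).
Proof.
by move=> /(integrableZl measurableT k); apply: eq_integrable.
Qed.

End Rintegral_linear.

Section l1norm.
Context {R : realType} {m : nat}.
Implicit Types v w : 'cV[R]_m.

Lemma l1norm_ge0 v : 0 <= l1norm v.
Proof. by apply: sumr_ge0 => i _; exact: normr_ge0. Qed.

Lemma ler_norm_l1norm v i : `|v i 0| <= l1norm v.
Proof.
rewrite /l1norm (bigD1 i) //= lerDl.
by apply: sumr_ge0 => j _; exact: normr_ge0.
Qed.

Lemma l1normB_le v w : l1norm (v - w) <= l1norm v + l1norm w.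
Proof.
rewrite /l1norm -big_split /=; apply: ler_sum => i _.
by rewrite !mxE; exact: ler_normB.
Qed.

End l1norm.

Section Rintegral_col.
Context {d} {T : measurableType d} {R : realType}.
Variable mu : {measure set T -> \bar R}.

Definition Rintegral_col {m} (w : T -> 'cV[R]_m) : 'cV[R]_m :=
  \col_i \int[mu]_t w t i 0.

Definition col_integrable {m} (w : T -> 'cV[R]_m) : Prop :=
  forall i, mu.-integrable setT (EFin \o (fun t => w t i 0)).

Lemma col_integrable_mulmx {n m} (A : 'M[R]_(n, m)) (w : T -> 'cV[R]_m) :
  col_integrable w -> col_integrable (fun t => A *m w t).
Proof.
move=> iw j; under eq_fun do rewrite mxE.
by apply: integrable_sumr => i; exact: integrableZl_EFin.
Qed.

Lemma Rintegral_col_mulmx n m (A : 'M[R]_(n, m)) (w : T -> 'cV[R]_m) :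
  col_integrable w -> Rintegral_col (fun t => A *m w t) = A *m Rintegral_col w.
Proof.
move=> iw; apply/colP => j; rewrite !mxE.
under eq_Rintegral do rewrite mxE.
rewrite Rintegral_sum => [|i]; last exact: integrableZl_EFin.
by apply: eq_bigr => i _; rewrite mxE RintegralZl.
Qed.

End Rintegral_col.

Section Rintegral_col_finite_measure.
Context {d} {T : measurableType d} {R : realType}.
Variable mu : {finite_measure set T -> \bar R}.

Lemma bounded_integrable (f : T -> R) (M : R) :
  measurable_fun setT f -> (forall t, `|f t| <= M) ->
  mu.-integrable setT (EFin \o f).
Proof.
move=> mf fM; apply: (@le_integrable _ _ _ mu _ _ _ (EFin \o cst M)) => //.
- exact/measurable_EFinP.
- by move=> t _ /=; rewrite lee_fin (le_trans (fM t)) // ler_norm.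
- exact: finite_measure_integrable_cst.
Qed.

Lemma l1norm_Rintegral_col_le m (w : T -> 'cV[R]_m) (M : R) :
  (forall i, measurable_fun setT (fun t => w t i 0)) ->
  (forall t, l1norm (w t) <= M) ->
  l1norm (Rintegral_col mu w) <= M * fine (mu setT).
Proof.
move=> mw wM.
have iw i : mu.-integrable setT (EFin \o (fun t => w t i 0)).
  apply: (bounded_integrable _ M) => // t.
  exact: le_trans (ler_norm_l1norm _ _) (wM t).
apply: (@le_trans _ _ (\sum_i \int[mu]_t `|w t i 0|)).
  by apply: ler_sum => i _; rewrite mxE le_normr_Rintegral.
rewrite -Rintegral_sum => [|i]; last exact: integrable_norm.
rewrite -Rintegral_cst //; apply: le_Rintegral => //.
- by apply: integrable_sumr => i; exact: integrable_norm.
- exact: finite_measure_integrable_cst.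
- by move=> t _; exact: wM.
Qed.

End Rintegral_col_finite_measure.

Lemma charge_jordan_decomposition {d} {T : measurableType d} {R : realType}
    (mu : {charge set T -> \bar R}) :
  exists mup mun : {finite_measure set T -> \bar R},
    charge_tv_norm mu = fine (mup setT) + fine (mun setT) /\
    forall f : T -> R,
      mup.-integrable setT (EFin \o f) -> mun.-integrable setT (EFin \o f) ->
      fine (cintegral mu f) = \int[mup]_t f t - \int[mun]_t f t.
Proof.
rewrite /charge_tv_norm /cintegral.
case: (cid (Hahn_decomposition mu)) => P hP; case: (cid hP) => N hPN /=.
exists (jordan_pos hPN), (jordan_neg hPN); split.
  by rewrite /charge_variation /= fineD //; exact: fin_num_measure.
by move=> f ip in_; rewrite fineB //; exact: integrable_fin_num.
Qed.

Lemma pd_kernel_Kmat_unit {R : realType} {X : Type} {K : X -> X -> R} {m}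
    {x : 'I_m -> X} :
  pd_reproducing_kernel K -> injective x -> Kmat K x \in unitmx.
Proof.
move=> [_ Kpd] injx; rewrite unitmxE unitfE; apply/negP => /det0P [r r0 rK].
have := Kpd m x injx r^T; rewrite trmx_eq0 r0 trmxK rK mul0mx mxE.
by rewrite ltxx => /(_ isT).
Qed.

Section kernel_interpolation.
Context {R : realType} {X : ptopologicalType} (K : X -> X -> R).

Lemma kernel_expansion_sample m (x : 'I_m -> X) (c : 'cV[R]_m) j :
  kernel_expansion K x c (x j) = (Kmat K x *m c) j 0.
Proof.
by rewrite /kernel_expansion !mxE; apply: eq_bigr => k _; rewrite !mxE.
Qed.

Lemma kernel_interpolation {m} (x : 'I_m -> X)
    (mu : {charge set borelType X -> \bar R}) :
  (forall t, continuous (fun s => K s t)) -> Kmat K x \in unitmx ->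
  (forall t, l1norm (invmx (Kmat K x) *m Kcol K x t) <= 1) ->
  exists c : 'cV[R]_m,
    (forall j, kernel_expansion K x c (x j) = f_of_measure K mu (x j)) /\
    l1norm c <= charge_tv_norm mu.
Proof.
move=> Kcont Kunit Kl1.
have [mup [mun [tvE cintE]]] := charge_jordan_decomposition mu.
pose w (t : borelType X) : 'cV[R]_m := invmx (Kmat K x) *m Kcol K x t.
have Kw t : Kmat K x *m w t = Kcol K x t by rewrite mulKVmx.
have mw i : measurable_fun setT (fun t => w t i 0).
  under eq_fun do rewrite mxE.
  apply: measurable_sum => l; apply: measurable_funM => //.
  under eq_fun do rewrite mxE.
  exact: continuous_borel_measurable.
have iw (nu : {finite_measure set borelType X -> \bar R}) : col_integrable nu w.
  move=> i; apply: (bounded_integrable nu _ 1) => // t.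
  exact: le_trans (ler_norm_l1norm _ _) (Kl1 t).
have iK (nu : {finite_measure set borelType X -> \bar R}) j :
    nu.-integrable setT (EFin \o (fun t => K t (x j))).
  have := col_integrable_mulmx nu (Kmat K x) w (iw nu) j.
  by apply: eq_integrable => // t _ /=; rewrite Kw mxE.
exists (Rintegral_col mup w - Rintegral_col mun w); split.
  move=> j; rewrite kernel_expansion_sample mulmxBr.
  rewrite -!Rintegral_col_mulmx // !mxE /f_of_measure cintE //.
  by congr (_ - _); apply: eq_Rintegral => t _; rewrite Kw mxE.
rewrite tvE; apply: le_trans (l1normB_le _ _) _.
by apply: lerD; rewrite -[X in _ <= X]mul1r; exact: l1norm_Rintegral_col_le.
Qed.

End kernel_interpolation.

Section empirical_error.
Context {R : realType} {X : ptopologicalType} {m : nat}.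
Variables (x : 'I_m -> X) (y : 'I_m -> R).

Lemma eq_emp_error {f g : X -> R} :
  (forall j, f (x j) = g (x j)) -> emp_error x y f = emp_error x y g.
Proof. by move=> fg; congr (_ * _); apply: eq_bigr => j _; rewrite fg. Qed.

Lemma l1_objectiveE (K : X -> X -> R) lam (c : 'cV[R]_m) :
  l1_objective K x y lam c =
  emp_error x y (kernel_expansion K x c) + lam * l1norm c.
Proof. by []. Qed.

End empirical_error.

Theorem lemma3p1 (R : realType) (X : pseudoPMetricType R) (Y : set R)
  (rho : probability (borelType X * R)%type R)
  (k : R.-pker (borelType X) ~> R) (K : X -> X -> R) :
  hausdorff_space X -> compact [set: X] ->
  rho.-negligible ([set: borelType X] `*` ~` Y) ->
  conditional_distribution rho k ->
  pd_reproducing_kernel K ->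
  (forall t : X, continuous (fun s : X => K s t)) ->
  kernel_span_dense K ->
  (forall m (x : 'I_m -> X), injective x ->
     forall t : X, l1norm (invmx (Kmat K x) *m Kcol K x t) <= 1) ->
  forall (m : nat) (x : 'I_m -> X) (y : 'I_m -> R),
  (0 < m)%N -> injective x -> (forall j, Y (y j)) ->
  forall lam : R, 0 < lam ->
  forall c : 'cV[R]_m,
  (forall c' : 'cV[R]_m, l1_objective K x y lam c <= l1_objective K x y lam c') ->
  forall mu : {charge set borelType X -> \bar R},
  let fz := kernel_expansion K x c in
  let g := f_of_measure K mu in
  let frho := regression_function k in
  gen_error_ext rho fz \is a fin_num ->
  gen_error_ext rho g \is a fin_num ->
  gen_error_ext rho frho \is a fin_num ->
  gen_error rho fz - gen_error rho frho <=
    sampling_error rho x y fz g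
    + regularization_error rho frho lam g (charge_tv_norm mu).
Proof.
move=> _ _ _ _ Kpd Kcont _ Kl1 m x y _ injx _ lam lam_gt0 c c_min mu fz g frho.
move=> _ _ _.
have [c' [c'_interp c'_le]] := kernel_interpolation K x mu Kcont
  (pd_kernel_Kmat_unit Kpd injx) (Kl1 m x injx).
have fz_le :
    emp_error x y fz + lam * l1norm c <= emp_error x y g + lam * l1norm c'.
  by rewrite -(eq_emp_error x y c'_interp) -!l1_objectiveE.
have pen_c_ge0 : 0 <= lam * l1norm c by rewrite mulr_ge0 ?l1norm_ge0 ?ltW.
have pen_c'_le : lam * l1norm c' <= lam * charge_tv_norm mu by rewrite ler_pM2l.
rewrite /sampling_error /regularization_error; lra.
Qed.
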